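(* Let $K$ be a totally ordered quasi-field of characteristic $1$ and let $x\in K$. (a) The set of polynomials $P\in K[X]$ admitting $x$ as a root is the ideal $J$ of $K[X]$ generated by the polynomials $X^k+x^k$, $k\ge 1$. (b) The set of rational polynomials in $K\{X\}$ admitting $x$ as a root is the ideal of $K\{X\}$ generated by (the image of) $X+x$.
   Context: A quasi-field of characteristic $1$ is a commutative semiring $K$ with $1+1=1$ in which every nonzero element is multiplicatively invertible; it is ordered by $a\le b$ iff $a+b=b$, and totally ordered means this order is total (so $a+b=\max(a,b)$). A point $x\in K$ is a root of $P\in K[X]$ if one can write $P=P_1+P_2$ with $P_1,P_2$ having disjoint sets of monomials and $P_1(x)=P_2(x)$ (equivalently, $P(x)=0$ or the maximal value of the monomials of $P$ at $x$ is attained by at least two distinct monomials). The semiring $K[X]$ has no zero divisors but is not cancellative; $K\{X\}$ denotes its image in its quasi-field of fractions, i.e. the quotient of $K[X]$ by the relation $P\sim Q$ iff $RP=RQ$ for some nonzero $R$; its elements are called rational polynomials, and a rational polynomial has $x$ as root if one (equivalently every) representative does. An ideal generated by a set $S$ consists of finite sums of multiples of elements of $S$. *)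

From HB Require Import structures.
From mathcomp Require Import all_boot all_order all_algebra.
Set Implicit Arguments. Unset Strict Implicit. Unset Printing Implicit Defensive.
Import GRing.Theory.
Local Open Scope ring_scope.

Definition qf_char1_total (K : comNzSemiRingType) : Prop :=
  [/\ (1 + 1 = 1 :> K),
      (forall a : K, a != 0 -> exists b : K, a * b = 1) &
      (forall a b : K, a + b = b \/ b + a = a)].

Definition is_root (K : comNzSemiRingType) (P : {poly K}) (x : K) : Prop :=
  exists P1 P2 : {poly K},
    [/\ P = P1 + P2,
        (forall i : nat, P1`_i = 0 \/ P2`_i = 0) &
        P1.[x] = P2.[x]].

Definition in_ideal_J (K : comNzSemiRingType) (x : K) (P : {poly K}) : Prop :=
  exists s : seq (nat * {poly K}),
    all (fun kq => (0 < kq.1)%N) s /\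
    P = \sum_(kq <- s) kq.2 * ('X^(kq.1) + (x ^+ kq.1)%:P).

(* The relation defining K{X} = K[X]/~ : P ~ Q iff R P = R Q for some R <> 0. *)
Definition ratpoly_eq (K : comNzSemiRingType) (P Q : {poly K}) : Prop :=
  exists R : {poly K}, R != 0 /\ R * P = R * Q.

Definition ratpoly_root (K : comNzSemiRingType) (P : {poly K}) (x : K) : Prop :=
  exists P' : {poly K}, ratpoly_eq P P' /\ is_root P' x.

Definition in_ratideal_Xx (K : comNzSemiRingType) (x : K) (P : {poly K}) : Prop :=
  exists s : seq {poly K},
    ratpoly_eq P (\sum_(q <- s) q * ('X + x%:P)).

From HB Require Import structures.
From mathcomp Require Import all_boot all_order all_algebra.
Import GRing.Theory.
Local Open Scope ring_scope.

(* Theorem 3.1: the roots of a point x of a totally ordered quasi-field K of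
   characteristic 1.  Write a ⊑ b for a + b = b; in characteristic one this is
   an order compatible with + and *, it is total on K, and so every finite sum
   in K equals its largest term.
   Part (a) goes through the tropical description of roots: x is a root of P
   iff P(x) = 0 or the largest monomial value P_i x^i is attained at two
   distinct indices.  Such "tropical roots" are stable under addition and
   contain every multiple q (X^k + x^k), hence contain J.  Conversely, if the
   maximum is attained at i, each other monomial P_l X^l is paired with a share
   d_l X^i of the i-th monomial, where d_l x^i = P_l x^l; every pair is a
   multiple of some X^m + x^m, and by idempotence the shares d_l add up to P_i.
   Part (b): in characteristic one (X + x)^(k-1) (X^k + x^k) = (X + x)^(2k-1),
   so every element of J becomes a multiple of u = X + x after multiplication
   by a power of u; as u is monic, this equivalence refines the relation
   defining K{X}.  Conversely multiples of X + x lie in J, so part (a) applies. *)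

Local Notation "a ⊑ b" := (a + b = b)%R (at level 70, no associativity).

Section PowerEquivalence.
Context {R : comPzSemiRingType} (u : R).

Definition pow_equiv (a b : R) := exists N, u ^+ N * a = u ^+ N * b.

Lemma pow_equivD a1 b1 a2 b2 :
  pow_equiv a1 b1 -> pow_equiv a2 b2 -> pow_equiv (a1 + a2) (b1 + b2).
Proof.
have raise M N a b : u ^+ N * a = u ^+ N * b -> u ^+ (M + N) * a = u ^+ (M + N) * b.
  by rewrite exprD -!mulrA => ->.
move=> [N1 e1] [N2 e2]; exists (N2 + N1)%N.
by rewrite !mulrDr (raise N2 N1 _ _ e1) addnC (raise N1 N2 _ _ e2).
Qed.

Lemma pow_equivMl c a b : pow_equiv a b -> pow_equiv (c * a) (c * b).
Proof. by move=> [N e]; exists N; rewrite mulrCA e mulrCA. Qed.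

End PowerEquivalence.

Section CharacteristicOne.
Context {R : comPzSemiRingType}.
Hypothesis one_add_one : 1 + 1 = 1 :> R.

Lemma addrr_id (a : R) : a + a = a.
Proof. by rewrite -[a]mulr1 -mulrDr one_add_one. Qed.

Lemma mulrn_id (a : R) m : (0 < m)%N -> a *+ m = a.
Proof. by case: m => // m _; elim: m => // m IH; rewrite mulrS IH addrr_id. Qed.

Lemma le1_trans (a b c : R) : a ⊑ b -> b ⊑ c -> a ⊑ c.
Proof. by move=> ab bc; rewrite -bc addrA ab. Qed.

Lemma le1_addl (a b : R) : a ⊑ a + b.
Proof. by rewrite addrA addrr_id. Qed.

Lemma le1_addr (a b : R) : b ⊑ a + b.
Proof. by rewrite addrCA addrr_id. Qed.

Lemma le1_add (a b c : R) : a ⊑ c -> b ⊑ c -> a + b ⊑ c.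
Proof. by move=> ac bc; rewrite -addrA bc ac. Qed.

Lemma le1_mulr (a b c : R) : a ⊑ b -> a * c ⊑ b * c.
Proof. by rewrite -mulrDl => ->. Qed.

Lemma le1_anti (a b : R) : a ⊑ b -> b ⊑ a -> a = b.
Proof. by move=> ab ba; rewrite -ab addrC ba. Qed.

Lemma le1_sum (I : Type) (r : seq I) (Pr : pred I) (F : I -> R) (c : R) :
  (forall i, Pr i -> F i ⊑ c) -> \sum_(i <- r | Pr i) F i ⊑ c.
Proof.
move=> hF; apply: (big_ind (fun v => v ⊑ c)) => [|u v|i]; first by rewrite add0r.
  exact: le1_add.
exact: hF.
Qed.

(* Idempotence lets sums over two overlapping ranges merge into a sum over
   their union. *)
Lemma sum_nat_union (t : nat -> R) a b c d : (a <= c <= b)%N -> (b <= d)%N ->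
  \sum_(a <= e < b) t e + \sum_(c <= e < d) t e = \sum_(a <= e < d) t e.
Proof.
move=> /andP[ac cb] bd; have cd := leq_trans cb bd.
rewrite (big_cat_nat ac cb) (big_cat_nat cb bd) (big_cat_nat ac cd) (big_cat_nat cb bd) /=.
by rewrite -addrA [X in _ + X]addrA addrr_id addrA.
Qed.

(* Binomial formula in characteristic one: all binomial coefficients are 1. *)
Lemma exprD_char1 (a b : R) n : (a + b) ^+ n = \sum_(0 <= i < n.+1) a ^+ (n - i) * b ^+ i.
Proof.
rewrite exprDn big_mkord; apply: eq_bigr => i _.
by rewrite mulrn_id // bin_gt0 -ltnS.
Qed.

(* (a + b)^n (a^m + b^m) = (a + b)^(n + m) as soon as m <= n + 1: the two
   shifted copies of the expansion of (a + b)^n cover that of (a + b)^(n+m). *)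
Lemma exprD_mul_powers (a b : R) n m : (m <= n.+1)%N ->
  (a + b) ^+ n * (a ^+ m + b ^+ m) = (a + b) ^+ (n + m).
Proof.
move=> mn; set t := fun e => a ^+ (n + m - e) * b ^+ e.
have low : \sum_(0 <= i < n.+1) a ^+ (n - i) * b ^+ i * a ^+ m = \sum_(0 <= i < n.+1) t i.
  apply: eq_big_nat => i /andP[_ lein].
  by rewrite /t mulrAC -exprD addnBAC.
have high : \sum_(0 <= i < n.+1) a ^+ (n - i) * b ^+ i * b ^+ m =
            \sum_(m <= i < n.+1 + m) t i.
  rewrite (big_addn 0 _ m) addnK; apply: eq_bigr => i _.
  by rewrite /t -mulrA -exprD subnDr addnC.
rewrite exprD_char1 mulrDr !big_distrl /= low high sum_nat_union ?mn ?leq_addr //.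
by rewrite exprD_char1 addSn.
Qed.

(* The case n = k - 1, m = k: a^k + b^k is equivalent to (a + b)^k up to
   powers of a + b. *)
Lemma pow_equiv_powers (a b : R) k : (0 < k)%N ->
  pow_equiv (a + b) (a ^+ k + b ^+ k) ((a + b) ^+ k).
Proof. by move=> k_gt0; exists k.-1; rewrite exprD_mul_powers ?prednK // exprD. Qed.

End CharacteristicOne.

Section Roots.
Context {K : comNzSemiRingType} (hK : qf_char1_total K) (x : K).
Implicit Types (P Q q : {poly K}) (a b c : K).

Let one_add_one : 1 + 1 = 1 :> K. Proof. by case: hK. Qed.

Lemma le1_total a b : a ⊑ b \/ b ⊑ a.
Proof. by case: hK. Qed.

Lemma sum_eq_term (I : Type) (r : seq I) (F : I -> K) :
  \sum_(i <- r) F i = 0 \/ exists i, \sum_(i <- r) F i = F i.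
Proof.
apply: (big_ind (fun v => v = 0 \/ exists i, v = F i)) => [|u v hu hv|i _]; first by left.
- by case: (le1_total u v) => [-> // | vu]; rewrite addrC vu.
- by right; exists i.
Qed.

Lemma horner_eq_term P : P.[x] != 0 -> exists2 i, P`_i != 0 & P.[x] = P`_i * x ^+ i.
Proof.
rewrite horner_coef.
have [-> | [i ->]] := sum_eq_term _ (index_enum 'I_(size P)) (fun i => P`_i * x ^+ i).
  by rewrite eqxx.
by move=> nz; exists i => //; apply: contraNneq nz => ->; rewrite mul0r.
Qed.

Definition drop_coef (i : nat) P := \poly_(l < size P) (if l == i then 0 else P`_l).

Lemma coef_drop_coef i P l : (drop_coef i P)`_l = if l == i then 0 else P`_l.
Proof.
rewrite coef_poly; case: ltnP => // le_size.
by case: eqP => // _; rewrite nth_default.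
Qed.

Lemma monomial_split i P : P = (P`_i)%:P * 'X^i + drop_coef i P.
Proof.
apply/polyP => l; rewrite coefD coefCM coefXn coef_drop_coef.
by case: eqP => [->|_]; rewrite ?mulr1 ?addr0 ?mulr0 ?add0r.
Qed.

Lemma horner_monomial_split i P : P.[x] = P`_i * x ^+ i + (drop_coef i P).[x].
Proof. by rewrite {1}(monomial_split i P) hornerD hornerCM hornerXn. Qed.

Lemma le1_monomial_horner i P : P`_i * x ^+ i ⊑ P.[x].
Proof. by rewrite (horner_monomial_split i) le1_addl. Qed.

Lemma horner_eq_monomial i P c : P.[x] = c * x ^+ i -> c ⊑ P`_i -> P.[x] = P`_i * x ^+ i.
Proof.
move=> eP le_c; apply: le1_anti (le1_monomial_horner i P).
by rewrite {1}eP; apply: le1_mulr.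
Qed.

Definition tropical_root P := P.[x] = 0 \/
  exists i j, [/\ i != j, P.[x] = P`_i * x ^+ i & P.[x] = P`_j * x ^+ j].

(* The two halves of a splitting of P have disjoint supports, so their
   maximal monomials sit at distinct indices. *)
Lemma root_tropical P : is_root P x -> tropical_root P.
Proof.
move=> [P1 [P2 [-> disj e12]]]; rewrite /tropical_root hornerD -e12 addrr_id //.
have [->|nz1] := eqVneq P1.[x] 0; [by left | right].
have nz2 : P2.[x] != 0 by rewrite -e12.
have [i P1i ei] := horner_eq_term P1 nz1; have [j P2j ej] := horner_eq_term P2 nz2.
have P2i : P2`_i = 0 by case: (disj i) => // P1i0; rewrite P1i0 eqxx in P1i.
have P1j : P1`_j = 0 by case: (disj j) => // P2j0; rewrite P2j0 eqxx in P2j.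
exists i, j; split.
- by apply: contraNneq P1i => ->; rewrite P1j.
- by rewrite coefD P2i addr0.
- by rewrite coefD P1j add0r e12.
Qed.

(* Conversely split P into a maximal monomial and the rest, which still
   contains the second maximal monomial. *)
Lemma tropical_is_root P : tropical_root P -> is_root P x.
Proof.
case=> [P0 | [i [j [ij ei ej]]]].
  by exists 0, P; split; [rewrite add0r | left; rewrite coef0 | rewrite horner0].
exists ((P`_i)%:P * 'X^i), (drop_coef i P); split; first exact: monomial_split.
  move=> l; rewrite coefCM coefXn coef_drop_coef.
  by case: eqP; [right | left; rewrite mulr0].
rewrite hornerCM hornerXn -ei; apply: le1_anti.
  have := le1_monomial_horner j (drop_coef i P).
  by rewrite coef_drop_coef eq_sym (negbTE ij) -ej.
by rewrite addrC {1}ei -horner_monomial_split.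
Qed.

(* Adding a polynomial with smaller value keeps both maximal monomials. *)
Lemma tropical_rootD_le P Q : Q.[x] ⊑ P.[x] -> tropical_root P -> tropical_root (P + Q).
Proof.
move=> le_QP; rewrite /tropical_root hornerD addrC le_QP.
case=> [P0 | [i [j [ij ei ej]]]]; first by left.
have absorb k : P.[x] = P`_k * x ^+ k -> P.[x] = (P + Q)`_k * x ^+ k.
  move=> ek; rewrite coefD mulrDl -ek addrC.
  by apply/esym; apply: le1_trans (le1_monomial_horner k Q) le_QP.
by right; exists i, j; split; rewrite -?absorb.
Qed.

Lemma tropical_rootD P Q : tropical_root P -> tropical_root Q -> tropical_root (P + Q).
Proof.
move=> rP rQ; case: (le1_total Q.[x] P.[x]) => [le_QP | le_PQ].
  exact: tropical_rootD_le.
by rewrite addrC; apply: tropical_rootD_le.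
Qed.

(* In q (X^k + x^k), a maximal monomial q_i X^i of q produces maximal
   monomials at the distinct indices i and i + k. *)
Lemma tropical_root_gen k q : (0 < k)%N -> tropical_root (q * ('X^k + (x ^+ k)%:P)).
Proof.
move=> k_gt0; set T := q * _.
have eT : T.[x] = q.[x] * x ^+ k by rewrite hornerM hornerD hornerXn hornerC addrr_id.
have cT l : T`_l = (if (l < k)%N then 0 else q`_(l - k)) + q`_l * x ^+ k.
  by rewrite /T mulrDr coefD coefMXn coefMC.
have [q0|nz] := eqVneq q.[x] 0; first by left; rewrite eT q0 mul0r.
have [i _ ei] := horner_eq_term q nz; right; exists i, (i + k)%N; split.
- by rewrite -{1}[i]addn0 eqn_add2l eq_sym -lt0n.
- apply: (horner_eq_monomial _ _ (q`_i * x ^+ k)); last by rewrite cT le1_addr.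
  by rewrite eT ei mulrAC.
- apply: (horner_eq_monomial _ _ q`_i); last by rewrite cT ltnNge leq_addl /= addnK le1_addl.
  by rewrite eT ei -mulrA -exprD.
Qed.

Lemma J_ind (Pr : {poly K} -> Prop) :
  Pr 0 -> (forall P Q, Pr P -> Pr Q -> Pr (P + Q)) ->
  (forall k q, (0 < k)%N -> Pr (q * ('X^k + (x ^+ k)%:P))) ->
  forall P, in_ideal_J x P -> Pr P.
Proof.
move=> Pr0 PrD Prgen P [s [hs ->]]; rewrite big_seq.
by apply: big_ind => // -[k q] /(allP hs); apply: Prgen.
Qed.

Lemma J_tropical P : in_ideal_J x P -> tropical_root P.
Proof.
apply: J_ind; [by left; rewrite horner0 | exact: tropical_rootD | exact: tropical_root_gen].
Qed.

Lemma J_gen k q : (0 < k)%N -> in_ideal_J x (q * ('X^k + (x ^+ k)%:P)).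
Proof. by move=> k_gt0; exists [:: (k, q)]; rewrite /= k_gt0 big_seq1. Qed.

Lemma J_sum (I : Type) (r : seq I) (Pr : pred I) (F : I -> {poly K}) :
  (forall i, Pr i -> in_ideal_J x (F i)) -> in_ideal_J x (\sum_(i <- r | Pr i) F i).
Proof.
move=> hF; apply: big_ind => //; first by exists [::]; rewrite big_nil.
move=> _ _ [s1 [h1 ->]] [s2 [h2 ->]].
by exists (s1 ++ s2); rewrite all_cat h1 h2 big_cat.
Qed.

(* Two monomials of equal value at x form an element of J, when the lower one
   carries the factor x^(l - i) ... *)
Lemma J_pair_above i l c : (i < l)%N ->
  in_ideal_J x (c%:P * 'X^l + (c * x ^+ (l - i))%:P * 'X^i).
Proof.
move=> il; have -> : c%:P * 'X^l + (c * x ^+ (l - i))%:P * 'X^i =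
                    (c%:P * 'X^i) * ('X^(l - i) + (x ^+ (l - i))%:P).
  by rewrite mulrDr -mulrA -exprD subnKC ?(ltnW il) // polyCM mulrAC.
by apply: J_gen; rewrite subn_gt0.
Qed.

(* ... or, when x is invertible with inverse y, the factor y^(i - l). *)
Lemma J_pair_below y i l c : x * y = 1 -> (l < i)%N ->
  in_ideal_J x (c%:P * 'X^l + (c * y ^+ (i - l))%:P * 'X^i).
Proof.
move=> xy li; have -> : c%:P * 'X^l + (c * y ^+ (i - l))%:P * 'X^i =
                       ((c * y ^+ (i - l))%:P * 'X^l) * ('X^(i - l) + (x ^+ (i - l))%:P).
  rewrite mulrDr -mulrA -exprD subnKC ?(ltnW li) // mulrAC -polyCM -mulrA.
  by rewrite -exprMn [y * x]mulrC xy expr1n mulr1 addrC.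
by apply: J_gen; rewrite subn_gt0.
Qed.

Lemma J_of_balanced {N : nat} (i0 : 'I_N) (d : nat -> K) P : (size P <= N)%N ->
  (forall l : 'I_N, l != i0 -> in_ideal_J x ((P`_l)%:P * 'X^l + (d l)%:P * 'X^i0)) ->
  \sum_(l < N | l != i0) d l = P`_i0 -> in_ideal_J x P.
Proof.
move=> sizeP pairs balance.
have -> : P = \sum_(l < N) (P`_l)%:P * 'X^l.
  under eq_bigr do rewrite mul_polyC.
  rewrite -poly_def; apply/polyP => m; rewrite coef_poly; case: ltnP => // Nm.
  by rewrite nth_default // (leq_trans sizeP Nm).
rewrite (bigD1 i0) //= -balance rmorph_sum big_distrl /= addrC -big_split /=.
exact: J_sum.
Qed.

(* If P(x) = 0, all monomial values vanish and shares P_l x^l at index 0 work. *)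
Lemma J_of_horner0 P : P.[x] = 0 -> in_ideal_J x P.
Proof.
move=> P0; have term0 l : P`_l * x ^+ l = 0.
  by have := le1_monomial_horner l P; rewrite P0 addr0.
apply: (J_of_balanced (ord0 : 'I_(size P).+1) (fun l => P`_l * x ^+ l)) => //.
- move=> l l0; have := J_pair_above 0 l (P`_l); rewrite subn0; apply.
  by rewrite lt0n.
- by rewrite big1 => [|l _]; [have := term0 0%N; rewrite mulr1 | exact: term0].
Qed.

Lemma index_lt_size {P} {k : nat} : P.[x] != 0 -> P.[x] = P`_k * x ^+ k -> (k < size P)%N.
Proof.
move=> nzP ek; rewrite ltnNge; apply: contra nzP => le_sz.
by rewrite ek nth_default ?mul0r.
Qed.

(* ... and if it is attained twice, x cannot be 0, since 0^k = 0 for k > 0. *)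
Lemma two_maxima_unit {P} {i j : nat} : i != j -> P.[x] != 0 ->
  P.[x] = P`_i * x ^+ i -> P.[x] = P`_j * x ^+ j -> exists y, x * y = 1.
Proof.
move=> ij nzP ei ej; case: hK => _ inv _; apply: inv; apply: contraNneq ij => x0.
have exp0 k : P.[x] = P`_k * x ^+ k -> k = 0%N.
  move=> ek; apply/eqP; apply: contraNT nzP => k_ne0.
  by rewrite ek x0 expr0n (negbTE k_ne0) mulr0.
by rewrite (exp0 i ei) (exp0 j ej).
Qed.

(* The nonzero case: the shares d_l = P_l x^(l - i) (or P_l y^(i - l)) all lie
   below P_i and d_j = P_i, so they add up to P_i. *)
Lemma J_of_two_maxima {P} {i j : nat} : i != j -> P.[x] != 0 ->
  P.[x] = P`_i * x ^+ i -> P.[x] = P`_j * x ^+ j -> in_ideal_J x P.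
Proof.
move=> ij nzP ei ej; have [y xy] := two_maxima_unit ij nzP ei ej.
pose d l := if (i < l)%N then P`_l * x ^+ (l - i) else P`_l * y ^+ (i - l).
have cancel a : a * x ^+ i * y ^+ i = a by rewrite -mulrA -exprMn xy expr1n mulr1.
have d_value l : d l * x ^+ i = P`_l * x ^+ l.
  rewrite /d; case: ltnP => [il | li]; first by rewrite -mulrA -exprD subnK // ltnW.
  rewrite -{2}(subnK li) exprD mulrA -(mulrA P`_l) -exprMn [y * x]mulrC xy.
  by rewrite expr1n mulr1.
have d_le l : d l ⊑ P`_i.
  rewrite -(cancel (d l)) -(cancel P`_i); apply: le1_mulr.
  by rewrite d_value -ei; apply: le1_monomial_horner.
have d_j : d j = P`_i by rewrite -(cancel (d j)) d_value -ej ei cancel.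
apply: (J_of_balanced (Ordinal (index_lt_size nzP ei)) d) => [|l li|] //.
- rewrite /d; case: ltnP => [il | le_li]; first exact: J_pair_above.
  by apply: J_pair_below xy _; rewrite ltn_neqAle le_li andbT; exact: li.
- apply: le1_anti; first by apply: le1_sum => l _; apply: d_le.
  have j_ne : Ordinal (index_lt_size nzP ej) != Ordinal (index_lt_size nzP ei).
    by rewrite -(inj_eq val_inj) /= eq_sym.
  by rewrite (bigD1 (Ordinal (index_lt_size nzP ej))) //= d_j le1_addl.
Qed.

Lemma tropical_J P : tropical_root P -> in_ideal_J x P.
Proof.
have [P0 _ | nzP] := eqVneq P.[x] 0; first exact: J_of_horner0.
case=> [P0 | [i [j [ij ei ej]]]]; first by rewrite P0 eqxx in nzP.
exact: J_of_two_maxima ij nzP ei ej.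
Qed.

Lemma root_iff_J P : is_root P x <-> in_ideal_J x P.
Proof.
split => [/root_tropical/tropical_J // | /J_tropical/tropical_is_root //].
Qed.

Lemma J_pow_equiv P : in_ideal_J x P -> exists Q, pow_equiv ('X + x%:P) P (Q * ('X + x%:P)).
Proof.
set u := 'X + x%:P; move: P; apply: (J_ind (fun P => exists Q, pow_equiv u P (Q * u))).
- by exists 0, 0%N; rewrite !mul0r.
- by move=> P1 P2 [Q1 e1] [Q2 e2]; exists (Q1 + Q2); rewrite mulrDl; apply: pow_equivD.
move=> k q k_gt0; exists (q * u ^+ k.-1); rewrite -mulrA -exprSr prednK //.
apply: pow_equivMl; rewrite rmorphXn.
by apply: pow_equiv_powers; rewrite // -polyCD one_add_one.
Qed.

(* A monic u is not a zero divisor, so equivalence up to powers of u can be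
   composed with the relation defining K{X}. *)
Lemma ratpoly_eq_pow_equiv {u P P' Q : {poly K}} : u \is monic ->
  ratpoly_eq P P' -> pow_equiv u P' Q -> ratpoly_eq P Q.
Proof.
move=> u_monic [S [S_nz eS]] [N eN]; exists (S * u ^+ N); split.
  by rewrite -lead_coef_eq0 lead_coef_Mmonic ?monic_exp // lead_coef_eq0.
by rewrite mulrAC eS mulrAC -!mulrA eN.
Qed.

End Roots.

Theorem theorem3p1 (K : comNzSemiRingType) (hK : qf_char1_total K) (x : K) :
  (forall P : {poly K}, is_root P x <-> in_ideal_J x P) /\
  (forall P : {poly K}, ratpoly_root P x <-> in_ratideal_Xx x P).
Proof.
split=> P; first exact: root_iff_J.
split.
- move=> [P' [PP' /(root_iff_J hK) /(J_pow_equiv hK) [Q eQ]]].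
  by exists [:: Q]; rewrite big_seq1; apply: ratpoly_eq_pow_equiv (monicXaddC x) PP' eQ.
- move=> [s PQ]; exists (\sum_(q <- s) q * ('X + x%:P)); split => //.
  apply/(root_iff_J hK)/J_sum => q _.
  by have := J_gen x 1 q; rewrite !expr1; apply.
Qed.
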